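(* Let $V$ be a module of the intermediate series over $\mathcal{L}[\frac12]$ on which $c$ acts as $0$ and on which $\mathcal{S}=\mathrm{span}\{Y_p,M_n\}$ acts nontrivially, and suppose $V$ has a basis $\{x_k\mid k\in\frac12\mathbb{Z}\}$ and there are $a,b,b'\in\mathbb{C}$ and $f_{p,k},g_{n,k}\in\mathbb{C}$ such that, for all $p\in\frac12+\mathbb{Z}$, $n\in\mathbb{Z}$, $k\in\frac12\mathbb{Z}$: $Y_px_k=f_{p,k}x_{k+p}$, $M_nx_k=g_{n,k}x_{k+n}$, $L_nx_k=(a+k+bn)x_{k+n}$ if $k\in\mathbb{Z}$ and $L_nx_k=(a+k+b'n)x_{k+n}$ if $k\in\frac12+\mathbb{Z}$. Then $b'=b+\frac12$, or $b'=b-\frac12$, or $(b,b')\in\{(0,\frac32),(\frac32,0),(1,-\frac12),(-\frac12,1)\}$.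
   Context: $\mathcal{L}[\frac12]$ is the complex Lie algebra with basis $\{L_m,Y_p,M_n,c\mid m,n\in\mathbb{Z},\ p\in\frac12+\mathbb{Z}\}$ and brackets $[L_m,L_{m'}]=(m'-m)L_{m+m'}+\delta_{m,-m'}\frac{m^3-m}{12}c$, $[L_m,Y_p]=(p-\frac m2)Y_{p+m}$, $[L_m,M_n]=nM_{n+m}$, $[Y_p,Y_{p'}]=(p'-p)M_{p+p'}$, $[Y_p,M_n]=[M_n,M_{n'}]=0$, $c$ central. With $\mathcal{H}=\mathrm{span}\{L_0,M_0,c\}$, a module of the intermediate series is an indecomposable module $V=\bigoplus_{\lambda\in\mathcal{H}^*}V^\lambda$, $V^\lambda=\{v\mid xv=\lambda(x)v\ \forall x\in\mathcal{H}\}$, with $\dim V^\lambda\le1$ for all $\lambda$. *)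

From HB Require Import structures.
From mathcomp Require Import all_boot all_order all_algebra.
Set Implicit Arguments. Unset Strict Implicit. Unset Printing Implicit Defensive.
Import Order.TTheory GRing.Theory Num.Theory.
Local Open Scope ring_scope.

(* Index conventions:
   - L_m, M_n with m, n : int;
   - Y_p with p in 1/2 + Z is encoded by i : int with p = i + 1/2;
   - basis vector x_k with k in (1/2)Z is encoded by j : int with k = j/2. *)

Section Lhalf.
Variables (C : numClosedFieldType) (V : lmodType C).

Definition op_linear (T : V -> V) : Prop :=
  forall (al : C) (u v : V), T (al *: u + v) = al *: T u + T v.

Definition is_Lhalf_module (L Y M : int -> V -> V) (cc : V -> V) : Prop :=
  [/\ (forall m, op_linear (L m)), (forall i, op_linear (Y i)),
      (forall n, op_linear (M n)), op_linear cc &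
  [/\
      (forall m m' v, L m (L m' v) - L m' (L m v) =
        (m' - m)%:~R *: L (m + m') v +
        (if m == - m' then ((m ^+ 3 - m)%:~R / 12%:R) else 0) *: cc v),
      (forall m i v, L m (Y i v) - Y i (L m v) =
        (i%:~R + 1 / 2%:R - m%:~R / 2%:R) *: Y (i + m) v),
      (forall m n v, L m (M n v) - M n (L m v) = n%:~R *: M (n + m) v),
      (forall i i' v, Y i (Y i' v) - Y i' (Y i v) = (i' - i)%:~R *: M (i + i' + 1) v) &
      [/\
      (forall i n v, Y i (M n v) = M n (Y i v)),
      (forall n n' v, M n (M n' v) = M n' (M n v)),
      (forall m v, cc (L m v) = L m (cc v)),
      (forall i v, cc (Y i v) = Y i (cc v)) &
      (forall n v, cc (M n v) = M n (cc v))]]].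

(* Weight vectors for H = span{L_0, M_0, c}; a weight lambda in H^* is
   given by its values (lambda(L_0), lambda(M_0), lambda(c)). *)
Definition in_weight_space (L M : int -> V -> V) (cc : V -> V)
    (lam : C * C * C) (v : V) : Prop :=
  [/\ L 0 v = lam.1.1 *: v, M 0 v = lam.1.2 *: v & cc v = lam.2 *: v].

Definition is_submodule (L Y M : int -> V -> V) (cc : V -> V) (W : V -> Prop) :=
  [/\ W 0, (forall u v, W u -> W v -> W (u + v)),
      (forall (al : C) v, W v -> W (al *: v)),
      (forall m v, W v -> W (L m v)) &
      [/\ (forall i v, W v -> W (Y i v)),
      (forall n v, W v -> W (M n v)) & (forall v, W v -> W (cc v))]].

Definition indecomposable (L Y M : int -> V -> V) (cc : V -> V) : Prop :=
  (exists v : V, v != 0) /\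
  forall W1 W2 : V -> Prop,
    is_submodule L Y M cc W1 -> is_submodule L Y M cc W2 ->
    (forall v, W1 v -> W2 v -> v = 0) ->
    (forall v, exists w1 w2, [/\ W1 w1, W2 w2 & v = w1 + w2]) ->
    (forall v, W1 v -> v = 0) \/ (forall v, W2 v -> v = 0).

Definition intermediate_series (L Y M : int -> V -> V) (cc : V -> V) : Prop :=
  [/\ indecomposable L Y M cc,
      (forall v, exists (s : seq (C * C * C)) (w : C * C * C -> V),
          (forall lam, in_weight_space L M cc lam (w lam)) /\
          v = \sum_(lam <- s) w lam),
      (forall (s : seq (C * C * C)) (w : C * C * C -> V), uniq s ->
          (forall lam, in_weight_space L M cc lam (w lam)) ->
          \sum_(lam <- s) w lam = 0 -> forall lam, lam \in s -> w lam = 0) &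
      (forall lam u v, in_weight_space L M cc lam u -> in_weight_space L M cc lam v ->
          exists al be : C, ((al != 0) || (be != 0)) /\ al *: u + be *: v = 0)].

Definition is_basis (x : int -> V) : Prop :=
  (forall (s : seq int) (co : int -> C), uniq s ->
      \sum_(j <- s) co j *: x j = 0 -> forall j, j \in s -> co j = 0) /\
  (forall v, exists (s : seq int) (co : int -> C), v = \sum_(j <- s) co j *: x j).

End Lhalf.

(* Write Y_{i+1/2} x_{j/2} = f i j x_{(j+2i+1)/2} and let beta j be b or b'
   according to the parity of j.  The proof only uses [L_m, Y_p]:
   - comparing coefficients in [L_m, Y_p] x_k gives a recurrence for f
     ("bracket_LY_coefficients"); the bracket [Y_p, Y_p'] = (p'-p) M_{p+p'}
     shows that Y acts nontrivially, so some f i j is nonzero, and the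
     recurrence propagates this to some f (-1) J <> 0;
   - restricted to the coset J + 2Z the recurrence is a polynomial system
     in X = 2a + J, B = 2 beta J, G = 2 beta (J+1).  Two explicit polynomial
     combinations of eleven of its instances ("quartic_relation",
     "sextic_relation") force (G - B)^2 = 1 or B + G in {1, 3}, and in the
     latter case B in {0, 1, 2, 3} resp. {-1, 0, 1, 2} ("elimination");
   - halving these pairs and using the symmetry in (b, b') gives the
     statement. *)

From HB Require Import structures.
From mathcomp Require Import all_boot all_order all_algebra.
From mathcomp Require Import ring zify.
Import Order.TTheory GRing.Theory Num.Theory.
Set Implicit Arguments. Unset Strict Implicit. Unset Printing Implicit Defensive.
Local Open Scope ring_scope.

Lemma odd_absz_dvd (z : int) : odd `|z| = ~~ (2 %| z)%Z.
Proof. by rewrite dvdzE /= dvdn2 negbK. Qed.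

Lemma odd_absz_add_even (z w : int) : odd `|z + 2 * w| = odd `|z|.
Proof. by rewrite !odd_absz_dvd rpredDr // dvdz_mulr. Qed.

Lemma odd_absz_addS (z : int) : odd `|z + 1| = ~~ odd `|z|.
Proof. by case: z => [n|[|n]] //=; rewrite ?addn1 ?subn1 ?negbK. Qed.

Definition coset_weight (R : Type) (b b' : R) (j : int) : R :=
  if odd `|j| then b' else b.

Lemma coset_weight_add_even (R : Type) (b b' : R) (j s : int) :
  coset_weight b b' (j + 2 * s) = coset_weight b b' j.
Proof. by rewrite /coset_weight odd_absz_add_even. Qed.

Lemma coset_weight_addS (R : Type) (b b' : R) (j : int) :
  coset_weight b b' (j + 1) = coset_weight b' b j.
Proof. by rewrite /coset_weight odd_absz_addS; case: (odd _). Qed.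

Lemma eq_from_vanishing (R : pzRingType) (x y k e : R) :
  e = 0 -> x - y = k * e -> x = y.
Proof. by move=> e0 xy; apply/eqP; rewrite -subr_eq0 xy e0 mulr0. Qed.

Lemma cancel_nonzero_factor (R : idomainType) (c p : R) : c != 0 -> c * p = 0 -> p = 0.
Proof. by move=> nz /eqP; rewrite mulf_eq0 (negbTE nz) => /eqP. Qed.

(* The pairs (B, G) = (2b, 2b') allowed by the lemma. *)
Definition admissible (R : pzRingType) (B G : R) : Prop :=
  G = B + 1 \/ G = B - 1 \/ (B = 0 /\ G = 3%:R) \/ (B = 3%:R /\ G = 0) \/
  (B = 2%:R /\ G = -1) \/ (B = -1 /\ G = 2%:R).

Lemma admissible_sym (R : pzRingType) (B G : R) :
  admissible B G -> admissible G B.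
Proof.
case=> [->|[->|[[-> ->]|[[-> ->]|[[-> ->]|[-> ->]]]]]]; rewrite /admissible.
- by right; left; rewrite addrK.
- by left; rewrite subrK.
- by right; right; right; left.
- by right; right; left.
- by right; right; right; right; right.
- by right; right; right; right; left.
Qed.

Lemma admissible_halves (R : numFieldType) (u v : R) :
  admissible (2%:R * u) (2%:R * v) ->
  v = u + 1 / 2%:R \/ v = u - 1 / 2%:R \/
  (u = 0 /\ v = 3%:R / 2%:R) \/ (u = 3%:R / 2%:R /\ v = 0) \/
  (u = 1 /\ v = - (1 / 2%:R)) \/ (u = - (1 / 2%:R) /\ v = 1).
Proof.
have half (w c : R) : 2%:R * w = c -> w = c / 2%:R by move=> <-; field.
case=> [/half->|[/half->|[[/half-> /half->]|[[/half-> /half->]|[[/half-> /half->]|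
  [/half-> /half->]]]]]].
- by left; field.
- by right; left; field.
- by right; right; left; split; field.
- by right; right; right; left; split; field.
- by right; right; right; right; left; split; field.
- by right; right; right; right; right; split; field.
Qed.

Section Elimination.
(* F i s stands for the coefficient of Y_{i+1/2} on x_{(J+2s)/2}, and
   X = 2a + J, B = 2 beta J, G = 2 beta (J+1); "defect i m s" is the defect
   of the recurrence coming from [L_m, Y_{i+1/2}] x_{(J+2s)/2}. *)
Variables (R : numDomainType) (X B G : R) (F : int -> int -> R).

Definition defect (i m s : int) : R :=
  F i s * (X + (2 * s + 2 * i + 1)%:~R + G * m%:~R)
  - (X + (2 * s)%:~R + B * m%:~R) * F i (s + m) - (2 * i + 1 - m)%:~R * F (i + m) s.

Hypothesis defect0 : forall i m s, defect i m s = 0.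

Lemma quartic_relation :
  F (-1) 0 * ((G - B - 1) * (G - B + 1) * (B + G - 3%:R) * (B + G - 1)) = 0.
Proof.
pose d1 := X + 1 - G; pose d2 := X + 3%:R - G; pose n2 := X + 4%:R - B.
transitivity (- (d1 * d2 * (2%:R * defect 0 1 0 - defect (-1) 1 0 * (X + 1 + G)
                             + defect (-1) 1 1 * (X + B)))
  - d1 * (X + 2%:R + B) * (X + B) * defect (-1) (-1) 2
  + (2%:R * (X + B) * (X + 1 + G) * d2 - (X + 2%:R + B) * (X + B) * n2)
    * defect (-1) (-1) 1).
  by rewrite /defect /d1 /d2 /n2; ring.
by rewrite !defect0; ring.
Qed.

(* The residual left by the instances (i, m) = (-1, -1), (-1, 2), (-1, 3),
   (1, 1); on the lines B + G = 3 and B + G = 1 it no longer depends on X. *)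
Definition sextic : R :=
  let d1 := X + 1 - G in let d2 := X + 3%:R - G in let d3 := X + 5%:R - G in
  let n1 := X + 2%:R - B in let n2 := X + 4%:R - B in let n3 := X + 6%:R - B in
  let c1 := 4%:R * (X + 1 + 2%:R * G) * (X + B) in
  let c2 := 4%:R * (X + 2%:R * B) * (X + 3%:R + G) in
  let c3 := - (4%:R * (X + 2%:R + 2%:R * B) * (X + B)) - 6%:R * (X + 3%:R * B) in
  (6%:R * (X - 1 + 3%:R * G) - 4%:R * (X - 1 + 2%:R * G) * (X + 3%:R + G))
    * d1 * d2 * d3 + (c1 * d2 * d3 + (c2 * d3 + c3 * n3) * n2) * n1.

Lemma sextic_relation : F (-1) 0 * sextic = 0.
Proof.
pose d1 := X + 1 - G; pose d2 := X + 3%:R - G; pose d3 := X + 5%:R - G.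
pose n2 := X + 4%:R - B; pose n3 := X + 6%:R - B.
pose c1 := 4%:R * (X + 1 + 2%:R * G) * (X + B).
pose c2 := 4%:R * (X + 2%:R * B) * (X + 3%:R + G).
pose c3 := - (4%:R * (X + 2%:R + 2%:R * B) * (X + B)) - 6%:R * (X + 3%:R * B).
transitivity (d1 * d2 * d3 * (12%:R * defect 1 1 0 - 4%:R * defect (-1) 2 0 * (X + 3%:R + G)
                              + 4%:R * defect (-1) 2 1 * (X + B) + 6%:R * defect (-1) 3 0)
  - d1 * d2 * c3 * defect (-1) (-1) 3 - d1 * (c2 * d3 + c3 * n3) * defect (-1) (-1) 2
  - (c1 * d2 * d3 + (c2 * d3 + c3 * n3) * n2) * defect (-1) (-1) 1).
  by rewrite /sextic /defect /d1 /d2 /d3 /n2 /n3 /c1 /c2 /c3; ring.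
by rewrite !defect0; ring.
Qed.

End Elimination.

Lemma sextic_on_sum3 (R : numDomainType) (X B : R) :
  sextic X B (3%:R - B) = 32%:R * (B * (B - 1) * (B - 2%:R) * (B - 3%:R)).
Proof. by rewrite /sextic; ring. Qed.

Lemma sextic_on_sum1 (R : numDomainType) (X B : R) :
  sextic X B (1 - B) = - (32%:R * ((B + 1) * B * (B - 1) * (B - 2%:R))).
Proof. by rewrite /sextic; ring. Qed.

Lemma elimination (R : numDomainType) (X B G : R) (F : int -> int -> R) :
  (forall i m s, defect X B G F i m s = 0) -> F (-1) 0 != 0 -> admissible B G.
Proof.
move=> defect0 nzF.
have sext := cancel_nonzero_factor nzF (sextic_relation defect0).
have nz32 : 32%:R != 0 :> R by rewrite pnatr_eq0.
move/eqP: (cancel_nonzero_factor nzF (quartic_relation defect0)).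
rewrite !mulf_eq0 => /orP[/orP[/orP[]|]|] /eqP root.
- by left; apply: (eq_from_vanishing (k := 1) root); ring.
- by right; left; apply: (eq_from_vanishing (k := 1) root); ring.
- have eG : G = 3%:R - B by apply: (eq_from_vanishing (k := 1) root); ring.
  move: sext; rewrite eG sextic_on_sum3 => /(cancel_nonzero_factor nz32) /eqP.
  rewrite !mulf_eq0 => /orP[/orP[/orP[]|]|] /eqP rootB.
  + by right; right; left; rewrite rootB subr0.
  + by left; apply: (eq_from_vanishing (k := -2%:R) rootB); ring.
  + by right; left; apply: (eq_from_vanishing (k := -2%:R) rootB); ring.
  + have -> : B = 3%:R by apply: (eq_from_vanishing (k := 1) rootB); ring.
    by right; right; right; left; rewrite subrr.
- have eG : G = 1 - B by apply: (eq_from_vanishing (k := 1) root); ring.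
  move: sext; rewrite eG sextic_on_sum1 => /eqP; rewrite oppr_eq0 => /eqP.
  move=> /(cancel_nonzero_factor nz32) /eqP.
  rewrite !mulf_eq0 => /orP[/orP[/orP[]|]|] /eqP rootB.
  + have -> : B = -1 by apply: (eq_from_vanishing (k := 1) rootB); ring.
    by right; right; right; right; right; split=> //; rewrite opprK.
  + by left; apply: (eq_from_vanishing (k := -2%:R) rootB); ring.
  + by right; left; apply: (eq_from_vanishing (k := -2%:R) rootB); ring.
  + have -> : B = 2%:R by apply: (eq_from_vanishing (k := 1) rootB); ring.
    by right; right; right; right; left; split=> //; ring.
Qed.

Section CoefficientRecurrence.
(* f i j is the coefficient of Y_{i+1/2} on x_{j/2}, A = 2a, and the
   hypothesis is twice the coefficient identity of [L_m, Y_{i+1/2}] x_{j/2}. *)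
Variables (R : numDomainType) (A : R) (beta : int -> R) (f : int -> int -> R).

Hypothesis bracket : forall i m j : int,
  f i j * (A + (j + 2 * i + 1)%:~R + 2%:R * beta (j + 2 * i + 1) * m%:~R)
  - (A + j%:~R + 2%:R * beta j * m%:~R) * f i (j + 2 * m)
  = (2 * i + 1 - m)%:~R * f (i + m) j.

(* With m = i + 1 the bracket relates f i j to two coefficients of Y_{-1/2},
   the factor -(i + 2) being nonzero unless i = -2. *)
Lemma nonzero_at_minus_half_step (i j : int) :
  f i j != 0 -> i != -2 -> exists J, f (-1) J != 0.
Proof.
move=> nzf hi; have rel := bracket (-1) (i + 1) j.
have [f1|] := eqVneq (f (-1) j) 0; last by exists j.
have [f2|] := eqVneq (f (-1) (j + 2 * (i + 1))) 0; last by exists (j + 2 * (i + 1)).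
have coef : (2 * -1 + 1 - (i + 1) : int) != 0 by lia.
move: rel; rewrite f1 f2 mul0r mulr0 subrr (_ : -1 + (i + 1) = i); last by ring.
by move/esym/eqP; rewrite mulf_eq0 intr_eq0 (negbTE coef) (negbTE nzf).
Qed.

(* The case i = -2 reduces to i = 0 through the bracket with (i, m) = (0, -2). *)
Lemma nonzero_at_minus_half : (exists i j, f i j != 0) -> exists J, f (-1) J != 0.
Proof.
move=> [i [j nzf]]; have [eqi|] := eqVneq i (-2); last exact: nonzero_at_minus_half_step nzf.
have [f1|nz] := eqVneq (f 0 j) 0; last exact: nonzero_at_minus_half_step nz _.
have [f2|nz] := eqVneq (f 0 (j + 2 * -2)) 0; last exact: nonzero_at_minus_half_step nz _.
rewrite eqi in nzf; move: (bracket 0 (-2) j).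
by rewrite f1 f2 mul0r mulr0 subrr => /esym/eqP; rewrite mulf_eq0 (negbTE nzf) orbF intr_eq0.
Qed.

Hypothesis beta_periodic : forall j s, beta (j + 2 * s) = beta j.

Lemma coset_recurrence (J : int) (i m s : int) :
  defect (A + J%:~R) (2%:R * beta J) (2%:R * beta (J + 1))
         (fun i s => f i (J + 2 * s)) i m s = 0.
Proof.
have rel := bracket i m (J + 2 * s).
rewrite (_ : J + 2 * s + 2 * i + 1 = J + 1 + 2 * (s + i)) in rel; last by ring.
rewrite (_ : J + 2 * s + 2 * m = J + 2 * (s + m)) in rel; last by ring.
rewrite !beta_periodic in rel.
by apply/eqP; rewrite /defect subr_eq0 -rel; apply/eqP; ring.
Qed.

Lemma admissible_coset :
  (exists i j, f i j != 0) ->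
  exists J, admissible (2%:R * beta J) (2%:R * beta (J + 1)).
Proof.
move=> /nonzero_at_minus_half [J nzJ]; exists J.
apply: elimination (coset_recurrence J) _.
by rewrite /= mulr0 addr0.
Qed.

End CoefficientRecurrence.

Section LinearOperators.
Variables (C : numClosedFieldType) (V : lmodType C) (T : V -> V).
Hypothesis linT : op_linear T.

Lemma op_linear0 : T 0 = 0.
Proof.
have e := linT 1 0 0; rewrite scaler0 addr0 scale1r in e.
by apply: (addrI (T 0)); rewrite addr0 -e.
Qed.

Lemma op_linearZ (k : C) (v : V) : T (k *: v) = k *: T v.
Proof. by have := linT k v 0; rewrite !addr0 op_linear0 addr0. Qed.

Lemma op_linearD (u v : V) : T (u + v) = T u + T v.
Proof. by have := linT 1 u v; rewrite !scale1r. Qed.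

Lemma op_linear_sum (I : Type) (s : seq I) (F : I -> V) :
  T (\sum_(j <- s) F j) = \sum_(j <- s) T (F j).
Proof. exact: (big_morph T op_linearD op_linear0). Qed.

End LinearOperators.

Lemma basis_scale_eq0 (C : numClosedFieldType) (V : lmodType C) (x : int -> V)
    (n : int) (k : C) :
  is_basis x -> k *: x n = 0 -> k = 0.
Proof.
case=> indep _ e; apply: (indep [:: n] (fun _ => k) erefl); last exact: mem_head.
by rewrite big_seq1.
Qed.

Section ModuleCoefficients.
Variables (C : numClosedFieldType) (V : lmodType C) (L Y M : int -> V -> V).
Variables (x : int -> V) (a b b' : C) (f : int -> int -> C).
Hypotheses (linL : forall m, op_linear (L m)) (linY : forall i, op_linear (Y i)).
Hypothesis basis_x : is_basis x.
Hypothesis Y_x : forall i j, Y i (x j) = f i j *: x (j + 2 * i + 1).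
Hypothesis L_x : forall n j, L n (x j) =
  (a + j%:~R / 2%:R + (if odd `|j|%N then b' else b) * n%:~R) *: x (j + 2 * n).

Lemma bracket_LY_coefficients :
  (forall m i v, L m (Y i v) - Y i (L m v) =
     (i%:~R + 1 / 2%:R - m%:~R / 2%:R) *: Y (i + m) v) ->
  forall i m j : int,
  f i j * (2%:R * a + (j + 2 * i + 1)%:~R
           + 2%:R * coset_weight b b' (j + 2 * i + 1) * m%:~R)
  - (2%:R * a + j%:~R + 2%:R * coset_weight b b' j * m%:~R) * f i (j + 2 * m)
  = (2 * i + 1 - m)%:~R * f (i + m) j.
Proof.
move=> LY i m j; have := LY m i (x j).
rewrite !Y_x (op_linearZ (linL m)) !L_x (op_linearZ (linY i)) !Y_x !scalerA.
rewrite (_ : j + 2 * m + 2 * i + 1 = j + 2 * i + 1 + 2 * m); last by ring.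
rewrite (_ : j + 2 * (i + m) + 1 = j + 2 * i + 1 + 2 * m); last by ring.
move/eqP; rewrite -scalerBl -subr_eq0 -scalerBl.
move/eqP/(basis_scale_eq0 basis_x) => coef.
apply: (eq_from_vanishing (k := 2%:R) coef).
by rewrite /coset_weight; field.
Qed.

(* Y acts nontrivially: if M_n v <> 0, write M_n = [Y_p, Y_p'] / (p' - p). *)
Lemma Y_nontrivial :
  (forall i i' v, Y i (Y i' v) - Y i' (Y i v) = (i' - i)%:~R *: M (i + i' + 1) v) ->
  ((exists i v, Y i v != 0) \/ (exists n v, M n v != 0)) ->
  exists i v, Y i v != 0.
Proof.
move=> YY [//|[n [v nzM]]].
have from_bracket (i i' : int) : i' != i -> M (i + i' + 1) v != 0 ->
    exists k w, Y k w != 0.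
  move=> neq nz; have := YY i i' v.
  have [Y1|] := eqVneq (Y i (Y i' v)) 0; last by exists i, (Y i' v).
  have [Y2|] := eqVneq (Y i' (Y i v)) 0; last by exists i', (Y i v).
  rewrite Y1 Y2 subrr => /esym/eqP; rewrite scaler_eq0 intr_eq0 subr_eq0.
  by rewrite (negbTE neq) (negbTE nz).
have [eqn|neq] := eqVneq n (-1).
  by rewrite eqn in nzM; apply: (from_bracket 0 (-2)).
apply: (from_bracket n (-1)); first by rewrite eq_sym.
by rewrite (_ : n + -1 + 1 = n) //; ring.
Qed.

Lemma Y_coefficient_nonzero :
  (exists i v, Y i v != 0) -> exists i j, f i j != 0.
Proof.
move=> [i [v]]; have [s [co ->]] := basis_x.2 v.
rewrite op_linear_sum //; have [/hasP [j _ nzf]|/hasPn zero] := boolP (has (fun j => f i j != 0) s).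
  by exists i, j.
rewrite big1_seq ?eqxx // => j /zero /negPn /eqP fz.
by rewrite op_linearZ // Y_x fz scale0r scaler0.
Qed.

End ModuleCoefficients.

Unset Implicit Arguments.

Theorem lemma3p1 (C : numClosedFieldType) (V : lmodType C)
    (L Y M : int -> V -> V) (cc : V -> V)
    (x : int -> V) (a b b' : C) (f g : int -> int -> C) :
  is_Lhalf_module L Y M cc ->
  intermediate_series L Y M cc ->
  (forall v, cc v = 0) ->
  ((exists i v, Y i v != 0) \/ (exists n v, M n v != 0)) ->
  is_basis x ->
  (* Y_p x_k = f_{p,k} x_{k+p}, with p = i + 1/2, k = j/2 *)
  (forall i j, Y i (x j) = f i j *: x (j + 2 * i + 1)) ->
  (* M_n x_k = g_{n,k} x_{k+n} *)
  (forall n j, M n (x j) = g n j *: x (j + 2 * n)) ->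
  (* L_n x_k = (a + k + b n) x_{k+n} for k in Z, (a + k + b' n) x_{k+n} for k in 1/2+Z *)
  (forall n j, L n (x j) =
     (a + j%:~R / 2%:R + (if odd `|j|%N then b' else b) * n%:~R) *: x (j + 2 * n)) ->
  b' = b + 1 / 2%:R \/ b' = b - 1 / 2%:R \/
  (b = 0 /\ b' = 3%:R / 2%:R) \/ (b = 3%:R / 2%:R /\ b' = 0) \/
  (b = 1 /\ b' = - (1 / 2%:R)) \/ (b = - (1 / 2%:R) /\ b' = 1).
Proof.
move=> [linL linY _ _ [_ LY _ YY _]] _ _ nontriv basis_x Y_x _ L_x.
have rec := bracket_LY_coefficients linL linY basis_x Y_x L_x LY.
have nzf := Y_coefficient_nonzero linY basis_x Y_x (Y_nontrivial YY nontriv).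
have [J] := admissible_coset rec (@coset_weight_add_even C b b') nzf.
rewrite coset_weight_addS /coset_weight; case: (odd _) => adm.
- exact/admissible_halves/admissible_sym.
- exact: admissible_halves.
Qed.
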